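(* Let $m>2$ be odd and $n$ a positive integer. Then $O(m)$ divides $P(m,n)$.
   Context: For odd $m>2$, $O(m)$ is the multiplicative order of $2$ modulo $m$ (the least positive $k$ with $2^k\equiv1\pmod m$). For positive integers $m,n$, let $\mathbf{Z}_m$ be the integers modulo $m$ and $T:\mathbf{Z}_m^n\to\mathbf{Z}_m^n$, $T(a_0,\dots,a_{n-1})=(a_0+a_1,a_1+a_2,\dots,a_{n-1}+a_0)$. For $\mathbf{a}\in\mathbf{Z}_m^n$ the cycle length of $(T^k\mathbf{a})_{k\ge0}$ is the smallest positive integer $P$ such that there is $N$ with $T^{k+P}\mathbf{a}=T^k\mathbf{a}$ for all $k\ge N$. $P(m,n)$ denotes the maximum of these cycle lengths over all $\mathbf{a}\in\mathbf{Z}_m^n$. *)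

From mathcomp Require Import all_boot all_algebra.
Set Implicit Arguments. Unset Strict Implicit. Unset Printing Implicit Defensive.
Import GRing.Theory.

(* Vectors of Z_m^n, indices 0..n-1, entries in 'Z_m (meaningful for m > 1). *)
Definition vec (m n : nat) := {ffun 'I_n -> 'Z_m}.

(* T(a_0,...,a_{n-1}) = (a_0+a_1, a_1+a_2, ..., a_{n-1}+a_0):
   T(a)_i = a_i + a_{(i+1) mod n}  (ordS i has value i.+1 %% n). *)
Definition T (m n : nat) (a : vec m n) : vec m n :=
  [ffun i : 'I_n => (a i + a (ordS i))%R].

Definition is_eventual_period (m n : nat) (a : vec m n) (P : nat) : Prop :=
  exists N : nat, forall k : nat, N <= k -> iter (k + P) (@T m n) a = iter k (@T m n) a.

Definition is_cycle_length (m n : nat) (a : vec m n) (P : nat) : Prop :=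
  0 < P /\ is_eventual_period a P /\
  (forall Q : nat, 0 < Q -> is_eventual_period a Q -> P <= Q).

Definition is_Pmn (m n : nat) (P : nat) : Prop :=
  (exists a : vec m n, is_cycle_length a P) /\
  (forall (a : vec m n) (Q : nat), is_cycle_length a Q -> Q <= P).

Definition is_ord2 (m : nat) (k : nat) : Prop :=
  0 < k /\ 2 ^ k = 1 %[mod m] /\ (forall j : nat, 0 < j -> 2 ^ j = 1 %[mod m] -> k <= j).

From mathcomp Require Import all_boot all_algebra.
From Stdlib Require Import Classical.
Set Implicit Arguments. Unset Strict Implicit. Unset Printing Implicit Defensive.
Import GRing.Theory.

(* The map T is additive and commutes with the cyclic rotation of coordinates,
   and every vector is a sum of rotations of a unit vector e.  Hence every
   eventual period of e is one of every vector, so P(m,n) is exactly the cycle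
   length of e.  Under T the coordinate sum is multiplied by 2 and it equals 1
   on e, so 2^(N+P) = 2^N in Z_m; as 2 is invertible modulo the odd m, this
   gives 2^P = 1 and therefore O(m) | P(m,n). *)

Lemma classical_ex_minn (P : nat -> Prop) n :
  P n -> exists k, P k /\ forall j, P j -> k <= j.
Proof.
elim/ltn_ind: n => n IH Pn.
have [[j [Pj lt_jn]]|no_smaller] := classic (exists j, P j /\ j < n).
  exact: IH j lt_jn Pj.
exists n; split=> // j Pj; rewrite leqNgt; apply/negP => lt_jn.
by apply: no_smaller; exists j.
Qed.

Lemma ord2_dvdn m O k : is_ord2 m O -> 2 ^ k = 1 %[mod m] -> O %| k.
Proof.
move=> [O_gt0 [exp2O minO]] exp2k.
have exp2_divn_eq : 2 ^ k = 2 ^ (k %% O) * (2 ^ O) ^ (k %/ O).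
  by rewrite -expnM -expnD addnC mulnC -divn_eq.
have exp2r : 2 ^ (k %% O) = 1 %[mod m].
  rewrite -exp2k exp2_divn_eq -modnMmr -(modnXm _ _ (2 ^ O)) exp2O.
  by rewrite modnXm exp1n modnMmr muln1.
rewrite /dvdn; case: posnP => // r_gt0.
by have := minO _ r_gt0 exp2r; rewrite leqNgt ltn_pmod.
Qed.

Section CycleLength.
Variables m n : nat.
Implicit Types v : vec m n.

Lemma eventual_period_of_iter_eq v i j : i < j ->
  iter i (@T m n) v = iter j (@T m n) v -> is_eventual_period v (j - i).
Proof.
move=> lt_ij eq_ij; exists i => k le_ik.
rewrite -{1}(subnK le_ik) -addnA (subnKC (ltnW lt_ij)).
by rewrite iterD -eq_ij -iterD subnK.
Qed.

Lemma exists_eventual_period v : exists2 Q, 0 < Q & is_eventual_period v Q.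
Proof.
pose f (k : 'I_#|{: vec m n}|.+1) := iter k (@T m n) v.
have /injectivePn [i [j neq_ij eq_f]] : ~~ injectiveb f.
  by apply/injectiveP => /leq_card; rewrite card_ord ltnn.
have [lt_ij|lt_ji|eq_ij] := ltngtP i j; last by rewrite (val_inj eq_ij) eqxx in neq_ij.
- by exists (j - i); [rewrite subn_gt0 | exact: eventual_period_of_iter_eq].
- by exists (i - j); [rewrite subn_gt0 | exact: eventual_period_of_iter_eq].
Qed.

Lemma exists_cycle_length v : exists L, is_cycle_length v L.
Proof.
have [Q Q_gt0 perQ] := exists_eventual_period v.
have [L [[L_gt0 perL] minL]] :=
  @classical_ex_minn (fun Q => 0 < Q /\ is_eventual_period v Q) Q (conj Q_gt0 perQ).
by exists L; split; [|split] => // Q' Q'_gt0 perQ'; apply: minL.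
Qed.

End CycleLength.

Section DucciLinearity.
Variables m n : nat.
Local Open Scope ring_scope.
Implicit Types (u v : vec m n) (Q : nat).
Local Notation T := (@T m n).

Definition rot v : vec m n := [ffun i => v (ordS i)].
Definition delta (j : 'I_n) : vec m n := [ffun i => (i == j)%:R].

Lemma TD u v : T (u + v) = T u + T v.
Proof. by apply/ffunP => i; rewrite !ffunE addrACA. Qed.

Lemma T0 : T 0 = 0.
Proof. by apply/ffunP => i; rewrite !ffunE addr0. Qed.

Lemma T_rot v : T (rot v) = rot (T v).
Proof. by apply/ffunP => i; rewrite !ffunE. Qed.

Lemma iterTD k u v : iter k T (u + v) = iter k T u + iter k T v.
Proof. by elim: k => //= k ->; rewrite TD. Qed.

Lemma iterT0 k : iter k T 0 = 0.
Proof. by elim: k => //= k ->; rewrite T0. Qed.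

Lemma iterT_rot k v : iter k T (rot v) = rot (iter k T v).
Proof. by elim: k => //= k ->; rewrite T_rot. Qed.

Lemma rot_delta j : rot (delta (ordS j)) = delta j.
Proof. by apply/ffunP => i; rewrite !ffunE (inj_eq (@ordS_inj n)). Qed.

Lemma vec_sum_delta v : v = \sum_j delta j *+ v j.
Proof.
apply/ffunP => i; rewrite sum_ffunE (bigD1 i) //= big1 => [|j /negbTE neq_ji].
  by rewrite ffunMnE ffunE eqxx natr_Zp addr0.
by rewrite ffunMnE ffunE eq_sym neq_ji mul0rn.
Qed.

Lemma eventual_period0 Q : is_eventual_period (0 : vec m n) Q.
Proof. by exists 0%N => k _; rewrite !iterT0. Qed.

Lemma eventual_periodD u v Q : is_eventual_period u Q -> is_eventual_period v Q ->
  is_eventual_period (u + v) Q.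
Proof.
move=> [Nu perU] [Nv perV]; exists (maxn Nu Nv) => k; rewrite geq_max => /andP[leu lev].
by rewrite !iterTD perU ?perV.
Qed.

Lemma eventual_periodMn v k Q : is_eventual_period v Q -> is_eventual_period (v *+ k) Q.
Proof.
move=> perV; elim: k => [|k IH]; first exact: eventual_period0.
by rewrite mulrS; apply: eventual_periodD.
Qed.

Lemma eventual_period_rot v Q : is_eventual_period v Q -> is_eventual_period (rot v) Q.
Proof. by move=> [N perV]; exists N => k le_Nk; rewrite !iterT_rot perV. Qed.

Lemma val_iter_ordS k (j : 'I_n) : val (iter k (@ordS n) j) = ((j + k) %% n)%N.
Proof.
elim: k => [|k IH] /=; first by rewrite addn0 modn_small.
by rewrite IH addnS -addn1 modnDml addn1.
Qed.

Lemma eventual_period_delta j0 Q :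
  is_eventual_period (delta j0) Q -> forall v, is_eventual_period v Q.
Proof.
move=> perj0.
have per_delta_back k j :
    is_eventual_period (delta (iter k (@ordS n) j)) Q -> is_eventual_period (delta j) Q.
  elim: k j => // k IH j perk.
  by rewrite -rot_delta; apply/eventual_period_rot/IH; rewrite -iterSr.
have per_delta j : is_eventual_period (delta j) Q.
  apply: (per_delta_back (j0 + (n - j))%N); congr (is_eventual_period (delta _) Q): perj0.
  apply: val_inj; rewrite val_iter_ordS addnCA subnKC ?(ltnW (ltn_ord j)) //.
  by rewrite modnDr modn_small.
move=> v; rewrite (vec_sum_delta v).
apply: (big_ind (fun w => is_eventual_period w Q)) => //.
- exact: eventual_period0.
- by move=> u w; apply: eventual_periodD.
- by move=> j _; apply: eventual_periodMn.
Qed.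

End DucciLinearity.

Section VectorSum.
Variables m n : nat.
Local Open Scope ring_scope.
Implicit Types v : vec m n.

Definition vsum v : 'Z_m := \sum_i v i.

Lemma vsum_T v : vsum (T v) = 2 * vsum v.
Proof.
rewrite /vsum (eq_bigr (fun i => v i + v (ordS i))) => [|i _]; last by rewrite ffunE.
by rewrite big_split /= (reindex_inj (@ordS_inj n)) mulr2n mulrDl mul1r.
Qed.

Lemma vsum_iterT k v : vsum (iter k (@T m n) v) = 2 ^+ k * vsum v.
Proof. by elim: k => [|k IH] /=; rewrite ?mul1r // vsum_T IH exprS mulrA. Qed.

Lemma vsum_delta (j : 'I_n) : vsum (delta m j) = 1.
Proof.
rewrite /vsum (bigD1 j) //= ffunE eqxx big1 ?addr0 // => i /negbTE neq_ij.
by rewrite ffunE neq_ij.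
Qed.

Lemma exp2_eventual_period_delta (j : 'I_n) Q : (1 < m)%N -> odd m ->
  is_eventual_period (delta m j) Q -> (2 ^ Q = 1 %[mod m])%N.
Proof.
move=> m_gt1 m_odd [N perQ].
have unit2 : (2 : 'Z_m) \is a GRing.unit by rewrite unitZpE // coprimen2 m_odd.
have exp2NQ : 2 ^+ N * 2 ^+ Q = 2 ^+ N * 1 :> 'Z_m.
  have := congr1 vsum (perQ N (leqnn N)).
  by rewrite !vsum_iterT vsum_delta exprD !mulr1.
have /(congr1 (@nat_of_ord _)) := mulrI (unitrX N unit2) exp2NQ.
by rewrite -natrX -[1 in RHS](natr_Zp 1) !val_Zp_nat.
Qed.

End VectorSum.

Theorem proposition4p3 (m n : nat) (Hm : 2 < m) (Hodd : odd m) (Hn : 0 < n)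
  (O P : nat) (HO : is_ord2 m O) (HP : is_Pmn m n P) : O %| P.
Proof.
pose e0 := delta m (Ordinal Hn).
have [L cycle_e0] := exists_cycle_length e0.
have [[a [_ [_ minPa]]] maxP] := HP.
have [L_gt0 [perL _]] := cycle_e0.
have le_LP : L <= P := maxP e0 L cycle_e0.
have le_PL : P <= L := minPa L L_gt0 (eventual_period_delta perL a).
have -> : P = L by apply/anti_leq; rewrite le_PL le_LP.
exact: ord2_dvdn HO (exp2_eventual_period_delta (ltnW Hm) Hodd perL).
Qed.
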